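(* Let $c\ge0$, $\gamma\ge0$, $\sigma^2>0$ and $\alpha\in(0,1]$. Then the function $$f(x)=\frac{c+\gamma\sigma^{2\alpha}\left(2^{x}-1\right)^{\alpha}}{x}$$ is convex on $(0,\infty)$. In particular this holds with $c=P_0-P_{\mathrm{sleep}}$ whenever $P_0\ge P_{\mathrm{sleep}}$.
   Context: $P_0\ge0$ is the load-independent active power consumption and $P_{\mathrm{sleep}}$ a constant sleep power consumption. *)

From Stdlib Require Import Reals.
Open Scope R_scope.

Definition convex_on (D : R -> Prop) (f : R -> R) : Prop :=
  forall x y t, D x -> D y -> 0 <= t <= 1 ->
    f (t * x + (1 - t) * y) <= t * f x + (1 - t) * f y.

Definition pos_reals (x : R) : Prop := 0 < x.

(* f(x) = (c + gamma * (sigma^2)^alpha * (2^x - 1)^alpha) / x,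
   with sigma2 standing for sigma^2 > 0. *)
Definition energy_fun (c gamma sigma2 alpha : R) (x : R) : R :=
  (c + gamma * Rpower sigma2 alpha * Rpower (Rpower 2 x - 1) alpha) / x.

(* Write f = h / x with h = c + K * G, K = gamma * sigma2^alpha >= 0 and
   G(x) = (e^(L x) - 1)^a, L = ln 2.  The proof is a second-derivative test:
   - a function on an interval whose second derivative is nonnegative is
     convex (mean value theorem, twice);
   - the second derivative of h / x is (x^2 h'' - 2 x h' + 2 h) / x^3;
   - for G, with u = L x, p = e^u and w = p - 1, one computes
       x^2 G'' - 2 x G' + 2 G = G / w^2 * Q(u),
       Q(u) = (w - a u p)^2 + (w^2 - u^2 p) + (1 - a) u^2 p,
     which is nonnegative for a <= 1 because w^2 >= u^2 p, i.e.
     e^u - 1 >= u e^(u/2) (that is, sinh v >= v for v >= 0);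
   - hence x^2 h'' - 2 x h' + 2 h = 2 c + K (x^2 G'' - 2 x G' + 2 G) >= 0.
   The second part of the theorem is the instance c = P0 - Psleep. *)

From Stdlib Require Import Reals Lra Psatz.
From Coquelicot Require Import Coquelicot.
Open Scope R_scope.

Definition interval (D : R -> Prop) : Prop :=
  forall x y z, D x -> D y -> x <= z <= y -> D z.

Section DerivativeTests.

Variable D : R -> Prop.
Hypothesis D_interval : interval D.

Lemma nondecreasing_of_deriv_nonneg (g g1 : R -> R) :
  (forall x, D x -> is_derive g x (g1 x)) ->
  (forall x, D x -> 0 <= g1 x) ->
  forall x y, D x -> D y -> x <= y -> g x <= g y.
Proof.
  intros Dg Pos x y Dx Dy Hxy.
  destruct (Req_dec x y) as [<- | Hne]; [lra |].
  assert (Dsub : forall s, x <= s <= y -> D s) by (intros s Hs; exact (D_interval x y s Dx Dy Hs)).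
  destruct (MVT_cor2 g g1 x y) as [c [E Hc]]; [lra | |].
  - intros s Hs. apply is_derive_Reals, Dg, Dsub, Hs.
  - assert (0 <= g1 c) by (apply Pos, Dsub; lra). nra.
Qed.

(* A function whose derivative is nondecreasing on an interval is convex
   there: the slopes of the chords on [x, z] and [z, y] are ordered. *)
Lemma convex_of_deriv_nondecreasing (f f1 : R -> R) :
  (forall x, D x -> is_derive f x (f1 x)) ->
  (forall x y, D x -> D y -> x <= y -> f1 x <= f1 y) ->
  convex_on D f.
Proof.
  intros Df Mono.
  assert (Ordered : forall x y t, D x -> D y -> x < y -> 0 < t < 1 ->
            f (t * x + (1 - t) * y) <= t * f x + (1 - t) * f y).
  { intros x y t Dx Dy Hxy Ht.
    set (z := t * x + (1 - t) * y).
    assert (Hxz : x < z) by (unfold z; nra).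
    assert (Hzy : z < y) by (unfold z; nra).
    assert (Dsub : forall s, x <= s <= y -> D s)
      by (intros s Hs; exact (D_interval x y s Dx Dy Hs)).
    destruct (MVT_cor2 f f1 x z Hxz) as [c1 [E1 Hc1]].
    { intros s Hs. apply is_derive_Reals, Df, Dsub. lra. }
    destruct (MVT_cor2 f f1 z y Hzy) as [c2 [E2 Hc2]].
    { intros s Hs. apply is_derive_Reals, Df, Dsub. lra. }
    assert (Slopes : f1 c1 <= f1 c2) by (apply Mono; try apply Dsub; lra).
    replace (z - x) with ((1 - t) * (y - x)) in E1 by (unfold z; ring).
    replace (y - z) with (t * (y - x)) in E2 by (unfold z; ring).
    assert (Gap : 0 <= t * (1 - t) * (y - x) * (f1 c2 - f1 c1)).
    { apply Rmult_le_pos; [| lra]. apply Rmult_le_pos; [| lra]. nra. }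
    nra. }
  intros x y t Dx Dy Ht.
  destruct (Req_dec t 0) as [-> | Ht0].
  { replace (0 * x + (1 - 0) * y) with y by ring. lra. }
  destruct (Req_dec t 1) as [-> | Ht1].
  { replace (1 * x + (1 - 1) * y) with x by ring. lra. }
  destruct (Rtotal_order x y) as [Hxy | [<- | Hxy]].
  - apply Ordered; try assumption; lra.
  - replace (t * x + (1 - t) * x) with x by ring. lra.
  - replace (t * x + (1 - t) * y) with ((1 - t) * y + (1 - (1 - t)) * x) by ring.
    replace (t * f x + (1 - t) * f y) with ((1 - t) * f y + (1 - (1 - t)) * f x) by ring.
    apply Ordered; try assumption; lra.
Qed.

Lemma convex_of_second_deriv_nonneg (f f1 f2 : R -> R) :
  (forall x, D x -> is_derive f x (f1 x)) ->
  (forall x, D x -> is_derive f1 x (f2 x)) ->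
  (forall x, D x -> 0 <= f2 x) ->
  convex_on D f.
Proof.
  intros Df Df1 Pos.
  apply (convex_of_deriv_nondecreasing f f1 Df).
  exact (nondecreasing_of_deriv_nonneg f1 f2 Df1 Pos).
Qed.

End DerivativeTests.

Lemma interval_pos_reals : interval pos_reals.
Proof. unfold interval, pos_reals. intros. lra. Qed.

Lemma is_derive_div_id (h : R -> R) (x d : R) :
  x <> 0 -> is_derive h x d ->
  is_derive (fun y => h y / y) x ((x * d - h x) / (x * x)).
Proof.
  intros Hx Dh.
  auto_derive.
  - split; [eexists; exact Dh | tauto].
  - replace (Derive (fun y : R => h y) x) with d
      by (symmetry; apply is_derive_unique; exact Dh).
    field. exact Hx.
Qed.

Lemma is_derive_div_id_2 (h h1 : R -> R) (x d2 : R) :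
  x <> 0 -> is_derive h x (h1 x) -> is_derive h1 x d2 ->
  is_derive (fun y => (y * h1 y - h y) / (y * y)) x
            ((x * x * d2 - 2 * x * h1 x + 2 * h x) / (x * x * x)).
Proof.
  intros Hx Dh Dh1.
  auto_derive.
  - repeat split; [eexists; exact Dh1 | eexists; exact Dh |].
    apply Rmult_integral_contrapositive; tauto.
  - replace (Derive (fun y : R => h y) x) with (h1 x)
      by (symmetry; apply is_derive_unique; exact Dh).
    replace (Derive (fun y : R => h1 y) x) with d2
      by (symmetry; apply is_derive_unique; exact Dh1).
    field. exact Hx.
Qed.

Lemma convex_div_id (h h1 h2 : R -> R) :
  (forall x, 0 < x -> is_derive h x (h1 x)) ->
  (forall x, 0 < x -> is_derive h1 x (h2 x)) ->
  (forall x, 0 < x -> 0 <= x * x * h2 x - 2 * x * h1 x + 2 * h x) ->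
  convex_on pos_reals (fun x => h x / x).
Proof.
  intros Dh Dh1 Pos.
  apply (convex_of_second_deriv_nonneg pos_reals interval_pos_reals _
           (fun x => (x * h1 x - h x) / (x * x))
           (fun x => (x * x * h2 x - 2 * x * h1 x + 2 * h x) / (x * x * x))).
  - intros x Hx. apply is_derive_div_id; [unfold pos_reals in Hx; lra | auto].
  - intros x Hx. apply is_derive_div_id_2; [unfold pos_reals in Hx; lra | auto ..].
  - intros x Hx. unfold pos_reals in Hx.
    apply Rmult_le_pos; [auto |].
    apply Rlt_le, Rinv_0_lt_compat. repeat apply Rmult_lt_0_compat; lra.
Qed.

(* e^(2v) - 1 >= 2 v e^v for v >= 0, i.e. sinh v >= v: the difference
   vanishes at 0 and has derivative 2 e^v (e^v - 1 - v) >= 0. *)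
Lemma exp_double_ge (v : R) : 0 <= v -> 2 * v * exp v <= exp (2 * v) - 1.
Proof.
  intros Hv.
  set (m := fun s => exp (2 * s) - 1 - 2 * s * exp s).
  assert (Dm : forall s, 0 <= s -> is_derive m s (2 * exp s * (exp s - 1 - s))).
  { intros s _. unfold m. auto_derive; [auto |].
    replace (2 * s) with (s + s) by ring. rewrite exp_plus. ring. }
  assert (Mono : m 0 <= m v).
  { apply (nondecreasing_of_deriv_nonneg (fun s => 0 <= s)) with
      (g1 := fun s => 2 * exp s * (exp s - 1 - s)); [| exact Dm | | lra ..].
    - unfold interval. intros. lra.
    - intros s _. pose proof (exp_pos s). pose proof (exp_ineq1_le s). nra. }
  unfold m in Mono. rewrite Rmult_0_r, exp_0 in Mono. lra.
Qed.

(* (e^u - 1)^2 >= u^2 e^u for u >= 0: square e^u - 1 >= u e^(u/2). *)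
Lemma exp_sub1_sqr_ge (u : R) : 0 <= u -> u * u * exp u <= (exp u - 1) * (exp u - 1).
Proof.
  intros Hu.
  pose proof (exp_double_ge (u / 2) ltac:(lra)) as Half.
  replace (2 * (u / 2)) with u in Half by field.
  assert (Eu : exp u = exp (u / 2) * exp (u / 2))
    by (rewrite <- exp_plus; f_equal; field).
  pose proof (exp_pos (u / 2)).
  assert (0 <= u * exp (u / 2)) by nra.
  rewrite Eu at 1.
  replace (u * u * (exp (u / 2) * exp (u / 2)))
    with ((u * exp (u / 2)) * (u * exp (u / 2))) by ring.
  apply Rmult_le_compat; lra.
Qed.

(* The polynomial Q(u) governing the sign of the second derivative of
   (e^(L x) - 1)^a / x, written with p = e^u and w = e^u - 1. *)
Definition curvature_poly (a u : R) : R :=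
  a * a * u * u * exp u * exp u - a * u * u * exp u
  - 2 * a * u * exp u * (exp u - 1) + 2 * (exp u - 1) * (exp u - 1).

(* Q(u) = (w - a u p)^2 + (w^2 - u^2 p) + (1 - a) u^2 p >= 0. *)
Lemma curvature_poly_nonneg (a u : R) : a <= 1 -> 0 <= u -> 0 <= curvature_poly a u.
Proof.
  intros Ha Hu.
  pose proof (exp_sub1_sqr_ge u Hu) as Key.
  pose proof (exp_pos u).
  assert (0 <= (1 - a) * (exp u * (u * u))) by (apply Rmult_le_pos; nra).
  pose proof (Rle_0_sqr (exp u - 1 - a * exp u * u)). unfold Rsqr in *.
  unfold curvature_poly. nra.
Qed.

Section PowerTerm.

Variables L a : R.
Hypothesis L_pos : 0 < L.

Definition pow_term (x : R) : R := exp (a * ln (exp (x * L) - 1)).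

Definition pow_term_d1 (x : R) : R :=
  a * L * exp (x * L) * pow_term x / (exp (x * L) - 1).

Definition pow_term_d2 (x : R) : R :=
  a * L * L * exp (x * L) * pow_term x * (a * exp (x * L) - 1)
  / ((exp (x * L) - 1) * (exp (x * L) - 1)).

(* w(x) = e^(L x) - 1 is positive on (0, +oo), so G is smooth there. *)
Lemma exp_sub1_pos (x : R) : 0 < x -> 0 < exp (x * L) - 1.
Proof. intros Hx. pose proof (exp_ineq1_le (x * L)). nra. Qed.

Lemma is_derive_pow_term (x : R) : 0 < x -> is_derive pow_term x (pow_term_d1 x).
Proof.
  intros Hx. pose proof (exp_sub1_pos x Hx).
  unfold pow_term_d1, pow_term. auto_derive; [lra |].
  unfold Rminus. field. lra.
Qed.

Lemma is_derive_pow_term_d1 (x : R) : 0 < x -> is_derive pow_term_d1 x (pow_term_d2 x).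
Proof.
  intros Hx. pose proof (exp_sub1_pos x Hx).
  unfold pow_term_d2, pow_term_d1, pow_term. auto_derive; [repeat split; lra |].
  unfold Rminus. field. lra.
Qed.

(* x^2 G'' - 2 x G' + 2 G = G / w^2 * Q(L x) >= 0. *)
Lemma pow_term_curvature_nonneg (x : R) :
  a <= 1 -> 0 < x -> 0 <= x * x * pow_term_d2 x - 2 * x * pow_term_d1 x + 2 * pow_term x.
Proof.
  intros Ha Hx. pose proof (exp_sub1_pos x Hx) as Hw.
  assert (E : x * x * pow_term_d2 x - 2 * x * pow_term_d1 x + 2 * pow_term x
              = pow_term x / ((exp (x * L) - 1) * (exp (x * L) - 1))
                * curvature_poly a (x * L)).
  { unfold pow_term_d2, pow_term_d1, curvature_poly. field. lra. }
  rewrite E. apply Rmult_le_pos.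
  - apply Rmult_le_pos; [apply Rlt_le, exp_pos |].
    apply Rlt_le, Rinv_0_lt_compat, Rmult_lt_0_compat; lra.
  - apply curvature_poly_nonneg; nra.
Qed.

End PowerTerm.

(* The energy function is convex on (0, +oo) for c, gamma >= 0 and alpha <= 1. *)
Lemma energy_fun_convex (c gamma sigma2 alpha : R) :
  0 <= c -> 0 <= gamma -> alpha <= 1 ->
  convex_on pos_reals (energy_fun c gamma sigma2 alpha).
Proof.
  intros Hc Hg Ha.
  set (L := ln 2). set (K := gamma * Rpower sigma2 alpha).
  assert (HL : 0 < L) by (unfold L; rewrite <- ln_1; apply ln_increasing; lra).
  assert (HK : 0 <= K) by (apply Rmult_le_pos; [lra | apply Rlt_le, exp_pos]).
  apply (convex_div_id (fun x => c + K * pow_term L alpha x)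
           (fun x => K * pow_term_d1 L alpha x) (fun x => K * pow_term_d2 L alpha x)).
  - intros x Hx. pose proof (is_derive_pow_term L alpha HL x Hx) as DG.
    auto_derive; [eexists; exact DG |].
    replace (Derive (fun y : R => pow_term L alpha y) x) with (pow_term_d1 L alpha x)
      by (symmetry; apply is_derive_unique; exact DG).
    ring.
  - intros x Hx. apply is_derive_scal, is_derive_pow_term_d1; assumption.
  - intros x Hx.
    pose proof (pow_term_curvature_nonneg L alpha HL x Ha Hx) as Curv.
    assert (Scaled : 0 <= K * (x * x * pow_term_d2 L alpha x - 2 * x * pow_term_d1 L alpha x
                      + 2 * pow_term L alpha x)) by (apply Rmult_le_pos; assumption).
    nra.
Qed.

Theorem lemma4 :
  (forall c gamma sigma2 alpha : R,
     0 <= c -> 0 <= gamma -> 0 < sigma2 -> 0 < alpha <= 1 ->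
     convex_on pos_reals (energy_fun c gamma sigma2 alpha))
  /\
  (forall P0 Psleep gamma sigma2 alpha : R,
     0 <= P0 -> P0 >= Psleep ->
     0 <= gamma -> 0 < sigma2 -> 0 < alpha <= 1 ->
     convex_on pos_reals (energy_fun (P0 - Psleep) gamma sigma2 alpha)).
Proof.
  split.
  - intros c gamma sigma2 alpha Hc Hg _ Ha.
    apply energy_fun_convex; lra.
  - intros P0 Psleep gamma sigma2 alpha _ HP Hg _ Ha.
    apply energy_fun_convex; lra.
Qed.
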